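(* Let $d\geq 2$ and let $u,v\in\mathcal M_d$ with $u\geq_{lex}v$ and $x_1\mid u$ be such that $I=(\mathcal L(u,v))\subset S$ is a completely lexsegment ideal which is not an initial lexsegment ideal. Let $j$ be the exponent of $x_n$ in $v$ and let $a=|\mathcal M_d\setminus\mathcal L^i(u)|$. Then $I$ is a Gotzmann ideal if and only if $$a\geq \binom{n+d-1}{d}-(j+1).$$
   Context: $k$ is a field, $S=k[x_1,\ldots,x_n]$ standard graded. $\mathcal M_d$ is the set of monomials of degree $d$ in $S$, ordered lexicographically with $x_1>\cdots>x_n$; $|\mathcal M_d|=\binom{n+d-1}{d}$. For $u\geq_{lex}v$ in $\mathcal M_d$, $\mathcal L(u,v)=\{w\in\mathcal M_d: u\geq_{lex}w\geq_{lex}v\}$ and $\mathcal L^i(v)=\{w\in\mathcal M_d: w\geq_{lex} v\}$ (initial lexsegment); an initial lexsegment ideal is an ideal generated by some $\mathcal L^i(v)$. For a set $\mathcal L\subset\mathcal M_d$, its shadow is $\mathrm{Shad}(\mathcal L)=\{x_iw: w\in\mathcal L, 1\le i\le n\}\subset\mathcal M_{d+1}$, and iterated shadows are defined recursively. A lexsegment $\mathcal L$ is completely lexsegment if all its iterated shadows are lexsegments (of the corresponding degrees); $(\mathcal L)$ is then called a completely lexsegment ideal. A graded ideal $I$ generated in degree $d$ is Gotzmann if the number of minimal generators of $\mathfrak m I$ (i.e. $\dim_k I_{d+1}$, $\mathfrak m=(x_1,\ldots,x_n)$) equals $|\mathrm{Shad}(\mathcal L)|$, where $\mathcal L$ is the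 initial lexsegment of $\mathcal M_d$ with $|\mathcal L|=\dim_k I_d$; equivalently, $I$ and the ideal generated by $\mathcal L$ have the same Hilbert function. *)

(* Monomials x_1^{e_1}...x_n^{e_n} are represented by their
   exponent lists [:: e_1; ...; e_n] : seq nat (index 0 <-> x_1). *)
From mathcomp Require Import all_boot.
Set Implicit Arguments. Unset Strict Implicit. Unset Printing Implicit Defensive.

Definition inM (n d : nat) (w : seq nat) : bool := (size w == n) && (sumn w == d).

Fixpoint mons (n d : nat) : seq (seq nat) :=
  match n with
  | 0 => if d == 0 then [:: [::]] else [::]
  | n'.+1 => flatten [seq [seq k :: s | s <- mons n' (d - k)] | k <- iota 0 d.+1]
  end.

Fixpoint lexgt (u v : seq nat) : bool :=
  match u, v with
  | a :: s, b :: t => (b < a) || ((a == b) && lexgt s t)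
  | _, _ => false
  end.
Definition lexge (u v : seq nat) : bool := (u == v) || lexgt u v.

(* a set of monomials of degree d is a predicate; we only consider its members in M_d *)
Definition card_deg (n d : nat) (L : pred (seq nat)) : nat := count L (mons n d).

Definition Lseg (n d : nat) (u v : seq nat) : pred (seq nat) :=
  fun w => [&& inM n d w, lexge u w & lexge w v].
Definition Linit (n d : nat) (v : seq nat) : pred (seq nat) :=
  fun w => inM n d w && lexge w v.

(* multiplication by x_(i+1) *)
Definition mulx (i : nat) (w : seq nat) : seq nat := incr_nth w i.

Definition shad (n d : nat) (L : pred (seq nat)) : pred (seq nat) :=
  fun w => has (fun w' => L w' && has (fun i => w == mulx i w') (iota 0 n)) (mons n d).

Fixpoint shadit (n d k : nat) (L : pred (seq nat)) : pred (seq nat) :=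
  match k with
  | 0 => fun w => inM n d w && L w
  | k'.+1 => shad n (d + k') (shadit n d k' L)
  end.

Definition is_lexseg (n d : nat) (L : pred (seq nat)) : Prop :=
  forall w1 w w2, inM n d w1 -> inM n d w2 -> L w1 -> L w2 ->
    inM n d w -> lexge w1 w -> lexge w w2 -> L w.

Definition completely_lexseg (n d : nat) (L : pred (seq nat)) : Prop :=
  forall k, is_lexseg n (d + k) (shadit n d k L).

Definition init_lexseg_card (n d m : nat) : pred (seq nat) :=
  fun w => w \in take m (sort lexge (mons n d)).

(* Gotzmann (for an ideal generated by the monomial set L subset M_d):
   dim I_{d+1} = |Shad(L)| equals |Shad(initial lexsegment of size |L|)| *)
Definition gotzmann (n d : nat) (L : pred (seq nat)) : Prop :=
  card_deg n d.+1 (shad n d L) =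
  card_deg n d.+1 (shad n d (init_lexseg_card n d (card_deg n d L))).

Definition is_init_lexseg (n d : nat) (L : pred (seq nat)) : Prop :=
  exists w, inM n d w /\ forall z, inM n d z -> L z = Linit n d w z.

From mathcomp Require Import all_boot zify.
Set Implicit Arguments. Unset Strict Implicit. Unset Printing Implicit Defensive.

(* Rank the monomials of M_d by  rank w = #{z in M_d | z >lex w},  so that
   |L^i(w)| = rank w + 1 and |L(u,v)| = rank v + 1 - rank u.  Put p = rank u,
   j = exponent of x_n in v and sigma(w) = |Shad L^i(w)|.
   (1) As Shad L(u,v) is a lexsegment from x_1 u down to x_n v, it is
       Shad L^i(v) minus the p monomials above x_1 u: sigma(v) = |Shad L(u,v)| + p.
   (2) If x_n | w, the lex predecessor of w is up w = x_(n-1) w / x_n, and adding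
       w to L^i(up w) adds only x_n w to the shadow.  Climbing t <= j steps from
       v gives v_t with rank v_t = rank v - t and sigma(v_t) = sigma(v) - t.
   (3) If x_n does not divide w, adding w to the set of monomials above it adds
       at least x_(n-1) w and x_n w to the shadow; and enlarging a lex-initial
       set E to F adds at least |F \ E| shadow elements (multiplication by x_n).
   If p <= j, the initial lexsegment with |L(u,v)| elements is L^i(v_p), and
   (1)-(2) give the Gotzmann equality.  If p > j, comparing that initial
   lexsegment with the monomials above v_j through (3) contradicts it.  Finally
   a + p + 1 = |M_d| = C(n+d-1,d), and n >= 2 since for n = 1 every lexsegment
   is initial. *)

Lemma lexgt_irr s : lexgt s s = false.
Proof. by elim: s => //= a s ->; rewrite ltnn eqxx. Qed.

Lemma lexgt_trans x y z : lexgt x y -> lexgt y z -> lexgt x z.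
Proof.
elim: y x z => [|b t IH] [|a s] [|c r] //=.
case/orP=> [h1|/andP[/eqP e1 h1]]; case/orP=> [h2|/andP[/eqP e2 h2]].
- by rewrite (ltn_trans h2 h1).
- by rewrite -e2 h1.
- by rewrite e1 h2.
- by rewrite e1 e2 eqxx (IH _ _ h1 h2) orbT.
Qed.

Lemma lexgt_asym x y : lexgt x y -> lexgt y x = false.
Proof. by move=> h; apply/negP=> /(lexgt_trans h); rewrite lexgt_irr. Qed.

Lemma lexgt_total x y : size x = size y -> x != y -> lexgt x y || lexgt y x.
Proof.
elim: x y => [|a s IH] [|b t] //= [] hs hne.
case: (ltngtP a b) => hab /=; rewrite ?orbT //; subst b.
by apply: IH => //; apply: contraNneq hne => ->.
Qed.

Lemma lexgeNgt x y : size x = size y -> lexge x y = ~~ lexgt y x.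
Proof.
move=> hs; rewrite /lexge; case: (eqVneq x y) => [->|hne] /=.
  by rewrite lexgt_irr.
case/orP: (lexgt_total hs hne) => h; first by rewrite h (lexgt_asym h).
by rewrite h; case: (lexgt x y) (lexgt_asym h) => // ->.
Qed.

Lemma lexge_trans x y z : lexge x y -> lexge y z -> lexge x z.
Proof.
rewrite /lexge; case/orP=> [/eqP->//|h1]; case/orP=> [/eqP<-|h2].
  by rewrite h1 orbT.
by rewrite (lexgt_trans h1 h2) orbT.
Qed.

Lemma lexgt_ge_trans x y z : lexgt x y -> lexge y z -> lexgt x z.
Proof. by move=> h; case/orP=> [/eqP<-//|h2]; apply: lexgt_trans h h2. Qed.

Lemma inM_size n d w : inM n d w -> size w = n.
Proof. by case/andP=> /eqP. Qed.

Lemma inM_deg_gt0 n d w i : inM n d w -> 0 < nth 0 w i -> 0 < d.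
Proof.
case/andP=> _ /eqP <- hp; apply: leq_trans hp _.
by elim: w i {n} => [|a s IH] [|i] //=; [apply: leq_addr | apply: leq_trans (IH i) (leq_addl _ _)].
Qed.

Lemma size_mulx i w : i < size w -> size (mulx i w) = size w.
Proof. by rewrite /mulx size_incr_nth => ->. Qed.

Lemma sumn_mulx i w : i < size w -> sumn (mulx i w) = (sumn w).+1.
Proof. by rewrite /mulx; elim: w i => [|x s IH] [|i] //= hi; rewrite IH // addnS. Qed.

Lemma inM_mulx n d i w : inM n d w -> i < n -> inM n d.+1 (mulx i w).
Proof.
case/andP=> /eqP hs /eqP hd hi.
by rewrite /inM size_mulx ?sumn_mulx ?hs ?hd ?eqxx.
Qed.

Lemma nth_mulx i j w : nth 0 (mulx i w) j = (i == j) + nth 0 w j.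
Proof. exact: nth_incr_nth. Qed.

Lemma mulx_comm i j w : i < size w -> j < size w -> mulx i (mulx j w) = mulx j (mulx i w).
Proof. by rewrite /mulx; elim: w i j => [|a s IH] [|i] [|j] //= hi hj; rewrite IH. Qed.

Lemma mulx_inj i a b : mulx i a = mulx i b -> size a = size b -> i < size a -> a = b.
Proof.
rewrite /mulx; elim: a b i => [|x s IH] [|y t] [|i] //= e [] hs hi.
  by case: e => -> ->.
by case: e => -> e; rewrite (IH _ _ e hs hi).
Qed.

Lemma lexgt_mulx u v i : size u = size v -> i < size u ->
  lexgt (mulx i u) (mulx i v) = lexgt u v.
Proof. by rewrite /mulx; elim: u v i => [|a s IH] [|b t] [|i] //= [] hs hi; rewrite IH. Qed.

Lemma lexge_mulx x y i : size x = size y -> i < size x ->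
  lexge x y -> lexge (mulx i x) (mulx i y).
Proof.
move=> hs hi; rewrite /lexge; case/orP=> [/eqP->|h]; first by rewrite eqxx.
by rewrite lexgt_mulx // h orbT.
Qed.

Lemma lexgt_mulx_lt c i l : i < l -> l < size c -> lexgt (mulx i c) (mulx l c).
Proof.
rewrite /mulx; elim: c i l => [|a s IH] [|i] [|l] //= hil hl; first by rewrite ltnSn.
by rewrite ltnn eqxx IH.
Qed.

Lemma lexge_mulx_le c i l : i <= l -> l < size c -> lexge (mulx i c) (mulx l c).
Proof.
rewrite leq_eqVlt /lexge; case/orP=> [/eqP->|h] hl; first by rewrite eqxx.
by rewrite lexgt_mulx_lt // orbT.
Qed.

Lemma mulx_decomp a b i l : mulx i a = mulx l b -> i != l -> size a = size b ->
  i < size a -> l < size a ->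
  exists c, [/\ a = mulx l c, b = mulx i c & size c = size a].
Proof.
rewrite /mulx; elim: a b i l => [|x s IH] [|y t] [|i] [|l] //= e hil [] hs hi hl.
- by case: e => e1 e2; subst; exists (x :: t); rewrite /= hs.
- by case: e => e1 e2; subst; exists (y :: s); rewrite /= hs.
- case: e => <- e; have [c [h1 h2 h3]] := IH _ _ _ e hil hs hi hl.
  by exists (x :: c); rewrite /= -h1 -h2 h3.
Qed.

Lemma lexgt_mulx_eq a b i l n : mulx i a = mulx l b -> i < l -> l < n ->
  size a = n -> size b = n -> lexgt b a.
Proof.
move=> e hil hl ha hb.
have hne : i != l by rewrite ltn_eqF.
have hi : i < size a by rewrite ha; lia.
have hl' : l < size a by rewrite ha.
have [c [ea eb hc]] := mulx_decomp e hne (etrans ha (esym hb)) hi hl'.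
by rewrite ea eb; apply: lexgt_mulx_lt; rewrite // hc.
Qed.

(* Division by a variable: decn w i = w / x_(i+1) when x_(i+1) | w. *)
Definition decn (w : seq nat) (i : nat) : seq nat := set_nth 0 w i (nth 0 w i).-1.

Lemma size_decn w i : i < size w -> size (decn w i) = size w.
Proof. by move=> hi; rewrite /decn size_set_nth (maxn_idPr hi). Qed.

Lemma mulx_decn w i : i < size w -> 0 < nth 0 w i -> mulx i (decn w i) = w.
Proof.
move=> hi hp; apply: (@eq_from_nth _ 0); first by rewrite size_mulx size_decn.
move=> k _; rewrite nth_mulx /decn nth_set_nth /=.
by case: (eqVneq i k) => [<-|//]; rewrite add1n prednK.
Qed.

Lemma inM_decn n d w i : inM n d.+1 w -> i < n -> 0 < nth 0 w i -> inM n d (decn w i).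
Proof.
move=> hw hi hp; have hs := inM_size hw.
have hi' : i < size w by rewrite hs.
case/andP: hw => _ /eqP; rewrite -{1}(mulx_decn hi' hp) sumn_mulx ?size_decn // => -[hd].
by rewrite /inM size_decn // hs hd !eqxx.
Qed.

Lemma mons_S n d :
  mons n.+1 d = flatten [seq [seq k :: s | s <- mons n (d - k)] | k <- iota 0 d.+1].
Proof. by []. Qed.

Lemma mem_mons n d w : (w \in mons n d) = inM n d w.
Proof.
rewrite /inM; elim: n d w => [|n IH] d w.
  by case: d => [|d] /=; case: w => [|a s].
rewrite mons_S; apply/flatten_mapP/idP.
  case=> k; rewrite mem_iota add0n ltnS => hk /mapP[s hs ->] /=.
  by rewrite IH in hs; case/andP: hs => /eqP-> /eqP->; rewrite subnKC // !eqxx.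
case: w => [//|a s] /andP[/eqP[hs] /eqP hd].
exists a; first by rewrite mem_iota add0n ltnS -hd /= leq_addr.
by apply/mapP; exists s => //; rewrite IH hs eqxx -hd /= addKn.
Qed.

Lemma mons_uniq n d : uniq (mons n d).
Proof.
elim: n d => [|n IH] d; first by case: d.
apply: allpairs_uniq_dep => [|k _|]; [exact: iota_uniq | exact: IH |].
by case=> [a s] [b t] _ _ /= [-> ->].
Qed.

Lemma count_pred1_mons n d w : inM n d w -> count (pred1 w) (mons n d) = 1.
Proof. by move=> hw; rewrite (count_uniq_mem w (mons_uniq n d)) mem_mons hw. Qed.

Lemma size_mons_S n d :
  size (mons n.+1 d) = sumn [seq size (mons n (d - k)) | k <- iota 0 d.+1].
Proof.
rewrite mons_S size_flatten /shape -map_comp; congr sumn.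
by apply: eq_map => k /=; rewrite size_map.
Qed.

(* Pascal's rule: a monomial of degree d+1 in n+1 variables either avoids x_1 or is
   x_1 times a monomial of degree d. *)
Lemma size_mons_rec n d : size (mons n.+1 d.+1) = size (mons n d.+1) + size (mons n.+1 d).
Proof.
rewrite !size_mons_S.
have -> : iota 0 d.+2 = 0 :: map (addn 1) (iota 0 d.+1) by rewrite -iotaDl.
move: (iota 0 d.+1) => s.
by rewrite /= subn0 -map_comp; congr (_ + sumn _); apply: eq_map.
Qed.

Lemma size_mons n d : size (mons n.+1 d) = 'C(n + d, d).
Proof.
elim: n d => [|n IH] d.
  elim: d => [//|d IHd]; by rewrite size_mons_rec IHd !binn.
elim: d => [|d IHd]; first by rewrite size_mons_S /= addn0 IH !bin0.
by rewrite size_mons_rec IH IHd -addSnnS -[in RHS]addSnnS binS.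
Qed.

Lemma count_inj (T1 T2 : eqType) (s1 : seq T1) (s2 : seq T2) (P : pred T1) (Q : pred T2)
  (f : T1 -> T2) : uniq s1 ->
  (forall x y, x \in s1 -> y \in s1 -> P x -> P y -> f x = f y -> x = y) ->
  (forall x, x \in s1 -> P x -> f x \in s2 /\ Q (f x)) -> count P s1 <= count Q s2.
Proof.
move=> u1 hinj hmap; rewrite -!size_filter -(size_map f); apply: uniq_leq_size.
  rewrite map_inj_in_uniq ?filter_uniq // => x y.
  by rewrite !mem_filter => /andP[px sx] /andP[py sy]; apply: hinj.
move=> z /mapP[x]; rewrite mem_filter => /andP[px sx] ->.
by have [h1 h2] := hmap x sx px; rewrite mem_filter h1 h2.
Qed.

Lemma count_or (T : Type) (a b : pred T) s : (forall x, ~~ (a x && b x)) ->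
  count (fun x => a x || b x) s = count a s + count b s.
Proof.
move=> h; rewrite -count_predUI (@eq_count _ (predI a b) pred0) ?count_pred0 ?addn0 //.
by move=> x /=; apply/negbTE.
Qed.

Lemma count_split_in (T : eqType) (P Q : pred T) s : {in s, forall z, P z -> Q z} ->
  count Q s = count P s + count (fun z => Q z && ~~ P z) s.
Proof.
move=> h; rewrite -count_or; last by move=> z; rewrite andbCA andbN andbF.
by apply: eq_in_count => z /h /=; case: (P z) => [->|] //; rewrite andbT.
Qed.

Definition rank (n d : nat) (w : seq nat) : nat := count (fun z => lexgt z w) (mons n d).

Definition Labove (n d : nat) (w : seq nat) : pred (seq nat) :=
  fun z => inM n d z && lexgt z w.

Lemma card_Labove n d w : card_deg n d (Labove n d w) = rank n d w.
Proof. by apply: eq_in_count => z; rewrite mem_mons /Labove /= => ->. Qed.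

Lemma count_ge_mons n d w : inM n d w ->
  count (fun y => lexgt y w || (y == w)) (mons n d) = (rank n d w).+1.
Proof.
move=> hw; rewrite count_or ?count_pred1_mons ?addn1 // => x.
by apply/negP=> /andP[h /eqP e]; rewrite e lexgt_irr in h.
Qed.

Lemma card_Linit n d z : inM n d z -> card_deg n d (Linit n d z) = (rank n d z).+1.
Proof.
move=> hz; rewrite -count_ge_mons //; apply: eq_in_count => y.
by rewrite mem_mons /Linit /lexge /= orbC => ->.
Qed.

Lemma rank_le n d w z : lexge w z -> rank n d w <= rank n d z.
Proof. by move=> h; apply: sub_count => y /= hy; apply: lexgt_ge_trans hy h. Qed.

Lemma rank_lt n d w z : inM n d w -> lexgt w z -> rank n d w < rank n d z.
Proof.
move=> hw h; rewrite -count_ge_mons //; apply: sub_count => y /= /orP[hy|/eqP->] //.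
exact: lexgt_trans hy h.
Qed.

Lemma rank_gt n d w z : inM n d w -> inM n d z -> rank n d w < rank n d z -> lexgt w z.
Proof.
move=> hw hz hr; case: (eqVneq w z) => [e|hne]; first by rewrite e ltnn in hr.
have hs : size w = size z by rewrite (inM_size hw) (inM_size hz).
case/orP: (lexgt_total hs hne) => // h.
by have := rank_lt hz h; rewrite ltnNge (ltnW hr).
Qed.

Lemma card_Lseg n d u v : inM n d u -> inM n d v -> lexge u v ->
  card_deg n d (Lseg n d u v) + rank n d u = (rank n d v).+1.
Proof.
move=> hu hv huv; rewrite -card_Linit // /card_deg.
rewrite (count_split_in (P := Lseg n d u v) (Q := Linit n d v)); last first.
  by move=> w _ /and3P[h1 _ h3]; rewrite /Linit h1 h3.
congr (_ + _); apply: eq_in_count => w; rewrite mem_mons => hw /=.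
have hs : size u = size w by rewrite (inM_size hu) (inM_size hw).
rewrite /Linit /Lseg hw [lexge u w]lexgeNgt //.
case hg : (lexgt w u) => /=; last by rewrite andbN.
by rewrite (lexge_trans _ huv) // /lexge hg orbT.
Qed.

Lemma card_below n d u : inM n d u ->
  card_deg n d (fun w => inM n d w && ~~ lexge w u) + (rank n d u).+1 = size (mons n d).
Proof.
move=> hu; rewrite -card_Linit // /card_deg addnC -(count_predT (mons n d)).
rewrite (count_split_in (P := Linit n d u) (Q := predT)) //.
by congr (_ + _); apply: eq_in_count => w; rewrite mem_mons /Linit /= => ->.
Qed.

Lemma sorted_index w s : sorted lexge s -> uniq s -> w \in s ->
  index w s = count (fun z => lexgt z w) s.
Proof.
have htr : transitive lexge by move=> y x z; apply: lexge_trans.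
move=> hs hu hw; move: hs hu; case/splitPr: hw => s1 s2.
rewrite (sorted_pairwise htr) pairwise_cat pairwise_cons => /and4P[hrel _ hall _].
rewrite cat_uniq => /and3P[_ hn _].
have hw1 : w \notin s1 by apply: contra hn => h; apply/hasP; exists w; rewrite ?mem_head.
rewrite index_cat count_cat /= lexgt_irr (negbTE hw1) /= eqxx addn0.
rewrite (eq_in_count (a1 := fun z => lexgt z w) (a2 := pred0) (s := s2)); last first.
  move=> x hx /=; have /orP[/eqP->|h] := allP hall x hx; first by rewrite lexgt_irr.
  exact: lexgt_asym.
rewrite count_pred0 !addn0; apply/esym/eqP; rewrite -all_count; apply/allP => x hx.
have /orP[/eqP e|//] : lexge x w by move/allrelP: hrel; apply => //; rewrite mem_head.
by rewrite -e hx in hw1.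
Qed.

Lemma init_rank n d m w : inM n d w -> init_lexseg_card n d m w = (rank n d w < m).
Proof.
move=> hw; rewrite /init_lexseg_card.
set s := sort lexge (mons n d).
have hp : perm_eq s (mons n d) by apply/permPl/perm_sort.
have hws : w \in s by rewrite (perm_mem hp) mem_mons.
rewrite in_take // sorted_index //.
- by rewrite /rank (permP hp).
- apply: (sort_sorted_in (P := inM n d)); last by apply/allP => x; rewrite mem_mons.
  move=> x y hx hy; rewrite /lexge; case: (eqVneq x y) => //= hne.
  by apply: lexgt_total => //; case/andP: hx => /eqP->; case/andP: hy => /eqP->.
- by rewrite (perm_uniq hp) mons_uniq.
Qed.

Lemma card_init n d m : m <= size (mons n d) -> card_deg n d (init_lexseg_card n d m) = m.
Proof.
move=> hm; rewrite /card_deg /init_lexseg_card.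
set s := sort lexge (mons n d).
have hp : perm_eq s (mons n d) by apply/permPl/perm_sort.
have hu : uniq s by rewrite (perm_uniq hp) mons_uniq.
rewrite -(permP hp) -[X in count _ X](cat_take_drop m s) count_cat.
rewrite (eq_in_count (a2 := predT) (s := take m s)) // count_predT size_takel ?(perm_size hp) //.
rewrite -[RHS]addn0; congr (_ + _); apply/eqP; rewrite -leqn0 leqNgt -has_count.
move: hu; rewrite -{1}(cat_take_drop m s) cat_uniq => /and3P[_ hn _].
by apply: contra hn => /hasP[x h1 h2]; apply/hasP; exists x.
Qed.

Lemma init_Linit n d z : inM n d z -> forall w, inM n d w ->
  init_lexseg_card n d (rank n d z).+1 w = Linit n d z w.
Proof.
move=> hz w hw; rewrite init_rank // ltnS /Linit hw /=.
apply/idP/idP => h; last exact: rank_le.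
rewrite lexgeNgt ?(inM_size hw) ?(inM_size hz) //; apply/negP => hg.
by have := rank_lt hz hg; rewrite ltnNge h.
Qed.

Lemma shadP n d (L : pred (seq nat)) z :
  reflect (exists w i, [/\ inM n d w, L w, i < n & z = mulx i w]) (shad n d L z).
Proof.
apply: (iffP hasP).
  case=> w; rewrite mem_mons => hw /andP[Lw /hasP[i]]; rewrite mem_iota add0n => hi /eqP ->.
  by exists w, i.
case=> w [i [hw Lw hi ->]]; exists w; first by rewrite mem_mons.
by rewrite Lw; apply/hasP; exists i; rewrite ?mem_iota.
Qed.

Lemma shad_ext n d (P Q : pred (seq nat)) : (forall w, inM n d w -> P w = Q w) ->
  forall z, shad n d P z = shad n d Q z.
Proof. by move=> h z; apply: eq_in_has => w; rewrite mem_mons => hw /=; rewrite h. Qed.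

Lemma shad_mono n d (P Q : pred (seq nat)) : (forall w, inM n d w -> P w -> Q w) ->
  forall z, shad n d P z -> shad n d Q z.
Proof.
move=> h z /shadP[w [i [hw Pw hi ->]]]; apply/shadP; exists w, i; split => //.
exact: h.
Qed.

Definition shad_card (n d : nat) (L : pred (seq nat)) : nat := card_deg n d.+1 (shad n d L).

Lemma shad_card_ext n d (P Q : pred (seq nat)) : (forall w, inM n d w -> P w = Q w) ->
  shad_card n d P = shad_card n d Q.
Proof. by move=> h; apply: eq_count; apply: shad_ext. Qed.

Lemma no_between k c z : size c = k.+2 -> size z = k.+2 -> sumn z = (sumn c).+1 ->
  lexgt (mulx k c) z -> lexgt z (mulx k.+1 c) -> False.
Proof.
rewrite /mulx; elim: k c z => [|k IH] [|a [|b c]] [|x [|y z]] //=.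
- case: c => // _; case: z => // _; rewrite !addn0 => hs.
  case/orP=> [h1|/andP[/eqP e1 /orP[h1|/andP[_ //]]]];
  case/orP=> [h2|/andP[/eqP e2 /orP[h2|/andP[_ //]]]]; lia.
- move=> [hc] [hz] hs.
  case/orP=> [h1|/andP[/eqP e1 h1]]; case/orP=> [h2|/andP[/eqP e2 h2]]; try lia.
  by subst a; apply: (IH (b :: c) (y :: z)) => //=; lia.
Qed.

(* up n w = x_(n-1) w / x_n: the lex predecessor of w in M_d when x_n | w. *)
Definition up (n : nat) (w : seq nat) : seq nat := mulx n.-2 (decn w n.-1).

Section Predecessor.

Variables (n d : nat) (w : seq nat).
Hypotheses (n_gt1 : 1 < n) (w_in : inM n d w) (w_last : 0 < nth 0 w n.-1).

Lemma up_decomp :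
  exists2 c, inM n d.-1 c & [/\ w = mulx n.-1 c, up n w = mulx n.-2 c & d = d.-1.+1].
Proof.
have hd : d = d.-1.+1 by rewrite prednK // (inM_deg_gt0 w_in w_last).
have hn1 : n.-1 < size w by rewrite (inM_size w_in); lia.
exists (decn w n.-1); last by rewrite mulx_decn.
by apply: inM_decn; rewrite -?hd //; lia.
Qed.

Lemma inM_up : inM n d (up n w).
Proof. by have [c hc [_ -> ->]] := up_decomp; apply: inM_mulx => //; lia. Qed.

Lemma nth_up : nth 0 (up n w) n.-1 = (nth 0 w n.-1).-1.
Proof.
have [c _ [-> -> _]] := up_decomp.
by rewrite !nth_mulx eqxx (_ : n.-2 == n.-1 = false) //; apply/eqP; lia.
Qed.

Lemma lexgt_up : lexgt (up n w) w.
Proof.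
have [c hc [-> -> _]] := up_decomp.
by apply: lexgt_mulx_lt; [lia | rewrite (inM_size hc); lia].
Qed.

Lemma lexgt_upE z : inM n d z -> lexgt z w = (z == up n w) || lexgt z (up n w).
Proof.
move=> hz; case: (eqVneq z (up n w)) => [->|hne] /=; first exact: lexgt_up.
apply/idP/idP => [h|h]; last exact: lexgt_trans h lexgt_up.
have hs : size z = size (up n w) by rewrite (inM_size hz) (inM_size inM_up).
case/orP: (lexgt_total hs hne) => // hlt; exfalso.
have [c hc [ew eu hd]] := up_decomp.
have hn : n.-2.+1 = n.-1 by lia.
apply: (@no_between n.-2 c z).
- by rewrite (inM_size hc); lia.
- by rewrite (inM_size hz); lia.
- by case/andP: hz => _ /eqP->; case/andP: hc => _ /eqP->.
- by rewrite -eu.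
- by rewrite hn -ew.
Qed.

Lemma rank_up : rank n d w = (rank n d (up n w)).+1.
Proof.
rewrite -count_ge_mons ?inM_up //; apply: eq_in_count => z.
by rewrite mem_mons orbC => /lexgt_upE.
Qed.

End Predecessor.

Lemma Labove_Linit n d w z : Labove n d w z -> Linit n d w z.
Proof. by case/andP=> hz h; rewrite /Linit hz /lexge h orbT. Qed.

Lemma not_shad_above n d w k : inM n d w -> k < n ->
  (forall l, k < l < n -> nth 0 w l = 0) -> ~~ shad n d (Labove n d w) (mulx k w).
Proof.
move=> hw hk hl; apply/negP => /shadP[w' [l [hw' /andP[_ hgt] hln e]]].
have hs := inM_size hw; have hs' := inM_size hw'.
have hkw : k < size w by rewrite hs.
have hlw : l < size w by rewrite hs.
case: (ltngtP l k) => hlk.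
- by have := lexgt_mulx_eq (esym e) hlk hk hs' hs; rewrite (lexgt_asym hgt).
- have hne : k != l by rewrite ltn_eqF.
  have [c [ew _ _]] := mulx_decomp e hne (etrans hs (esym hs')) hkw hlw.
  by have := hl l; rewrite hlk hln ew nth_mulx eqxx => /(_ isT).
- subst l; have ew := mulx_inj e (etrans hs (esym hs')) hkw.
  by rewrite -ew lexgt_irr in hgt.
Qed.

Section ShadowStep.

Variables (n d : nat) (w : seq nat).
Hypotheses (n_gt1 : 1 < n) (w_in : inM n d w).

Lemma shad_Linit_self i : i < n -> shad n d (Linit n d w) (mulx i w).
Proof. by move=> hi; apply/shadP; exists w, i; rewrite /Linit w_in /lexge eqxx. Qed.

Lemma mulx_shad_above i : 0 < nth 0 w n.-1 -> i < n.-1 ->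
  shad n d (Labove n d w) (mulx i w).
Proof.
move=> hp hi; have [c hc [ew _ hd]] := up_decomp n_gt1 w_in hp.
have hcs := inM_size hc.
have hic : inM n d (mulx i c) by rewrite hd; apply: inM_mulx => //; lia.
apply/shadP; exists (mulx i c), n.-1; split; try lia.
- by rewrite /Labove hic ew /=; apply: lexgt_mulx_lt; rewrite ?hcs; lia.
- by rewrite ew mulx_comm // hcs; lia.
Qed.

Lemma shad_new_pos z : 0 < nth 0 w n.-1 -> inM n d.+1 z ->
  shad n d (Linit n d w) z && ~~ shad n d (Labove n d w) z = (z == mulx n.-1 w).
Proof.
move=> hp hz; apply/idP/eqP => [/andP[/shadP[w' [i [hw' hL hi ez]]] hnew]|->].
  have ew' : w' = w.
    case/andP: hL => _ /orP[/eqP //|hg]; case/negP: hnew.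
    by apply/shadP; exists w', i; rewrite /Labove hw' hg.
  subst z w'; case: (ltngtP i n.-1) => [hin||-> //]; last by lia.
  by rewrite mulx_shad_above in hnew.
rewrite shad_Linit_self ?not_shad_above //; lia.
Qed.

Lemma shad_step_pos : 0 < nth 0 w n.-1 ->
  shad_card n d (Linit n d w) = (shad_card n d (Labove n d w)).+1.
Proof.
move=> hp; rewrite /shad_card /card_deg.
rewrite (count_split_in (P := shad n d (Labove n d w))); last first.
  by move=> z _; apply: shad_mono => y _; apply: Labove_Linit.
rewrite -[RHS]addn1; congr (_ + _).
rewrite -(count_pred1_mons (inM_mulx w_in (_ : n.-1 < n))); last by lia.
by apply: eq_in_count => z; rewrite mem_mons => hz; apply: shad_new_pos.
Qed.

Lemma shad_step_zero : nth 0 w n.-1 = 0 ->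
  (shad_card n d (Labove n d w)).+2 <= shad_card n d (Linit n d w).
Proof.
move=> h0; rewrite /shad_card /card_deg.
rewrite (count_split_in (P := shad n d (Labove n d w)) (Q := shad n d (Linit n d w))); last first.
  by move=> z _; apply: shad_mono => y _; apply: Labove_Linit.
rewrite -addn2 leq_add2l.
have hne : mulx n.-1 w != mulx n.-2 w.
  apply/eqP => /(congr1 (nth 0 ^~ n.-1)); rewrite !nth_mulx eqxx h0.
  by rewrite (_ : n.-2 == n.-1 = false) //; apply/eqP; lia.
have <- : count (fun z => (z == mulx n.-1 w) || (z == mulx n.-2 w)) (mons n d.+1) = 2.
  rewrite count_or; last by move=> x; apply/negP => /andP[/eqP -> /eqP e]; rewrite e eqxx in hne.
  by rewrite !count_pred1_mons //; apply: inM_mulx => //; lia.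
apply: sub_count => z /orP[] /eqP -> /=.
- by rewrite shad_Linit_self ?not_shad_above //; lia.
- rewrite shad_Linit_self ?not_shad_above //; try lia.
  by move=> l hl; have -> : l = n.-1 by lia.
Qed.

End ShadowStep.

(* Enlarging a lex-initial set E inside F adds at least |F \ E| monomials to the
   shadow: x_n maps F \ E injectively into Shad F \ Shad E. *)
Lemma shad_growth n d (E F : pred (seq nat)) : 0 < n ->
  (forall w, inM n d w -> E w -> F w) ->
  (forall w w', inM n d w -> inM n d w' -> E w' -> lexgt w w' -> E w) ->
  shad_card n d E + card_deg n d F <= shad_card n d F + card_deg n d E.
Proof.
move=> hn hEF hdown; rewrite /shad_card /card_deg.
rewrite (count_split_in (P := E) (Q := F)); last by move=> w; rewrite mem_mons; apply: hEF.
rewrite (count_split_in (P := shad n d E) (Q := shad n d F) (s := mons n d.+1)); last first.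
  by move=> z _; apply: shad_mono.
rewrite -addnA leq_add2l addnC leq_add2r.
have hn1 : n.-1 < n by lia.
apply: (count_inj (f := mulx n.-1)); first exact: mons_uniq.
  move=> x y; rewrite !mem_mons => hx hy _ _ e.
  by apply: mulx_inj e _ _; rewrite (inM_size hx) ?(inM_size hy).
move=> w; rewrite mem_mons => hw /andP[Fw nEw]; split; first by rewrite mem_mons inM_mulx.
rewrite (_ : shad n d F _); last by apply/shadP; exists w, n.-1.
apply/negP => /shadP[w' [l [hw' Ew' hl e]]].
have hs := inM_size hw; have hs' := inM_size hw'.
have hnw : n.-1 < size w by rewrite hs.
case: (ltngtP l n.-1) => hln; [| lia |].
- by rewrite (hdown _ _ hw hw' Ew' (lexgt_mulx_eq (esym e) hln hn1 hs' hs)) in nEw.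
- subst l; have ew := mulx_inj e (etrans hs (esym hs')) hnw.
  by rewrite ew Ew' in nEw.
Qed.

Lemma climb n d v t : 1 < n -> inM n d v -> t <= nth 0 v n.-1 ->
  exists vt, [/\ inM n d vt, nth 0 vt n.-1 = nth 0 v n.-1 - t,
    rank n d vt + t = rank n d v &
    shad_card n d (Linit n d vt) + t = shad_card n d (Linit n d v)].
Proof.
move=> hn hv; elim: t => [|t IH] ht; first by exists v; rewrite subn0 !addn0.
have [vt [hvt hnth hrk hsh]] := IH (ltnW ht).
have hp : 0 < nth 0 vt n.-1 by rewrite hnth subn_gt0.
exists (up n vt); split; first exact: inM_up.
- by rewrite (nth_up hn hvt hp) hnth subnS.
- by rewrite addnS -addSn -(rank_up hn hvt hp).
- rewrite addnS -addSn -hsh (shad_step_pos hn hvt hp); congr (_.+1 + _).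
  by apply: shad_card_ext => z hz; rewrite /Labove /Linit hz (lexgt_upE hn hvt hp hz).
Qed.

Lemma head_pos z u : lexgt z (mulx 0 u) -> 0 < nth 0 z 0.
Proof.
rewrite /mulx; case: u => [|a u]; case: z => [|b z] //= /orP[h|/andP[/eqP-> _]] //.
- exact: leq_ltn_trans h.
- exact: leq_trans h.
Qed.

(* Division by x_1 is a bijection from the monomials above x_1 u onto those above u. *)
Lemma count_above_x1 n d u : 0 < n -> inM n d u ->
  count (fun z => lexgt z (mulx 0 u)) (mons n d.+1) = rank n d u.
Proof.
move=> hn hu; have hs := inM_size hu.
have hz0 z : inM n d.+1 z -> 0 < size z by move/inM_size->.
apply/eqP; rewrite eqn_leq; apply/andP; split.
- apply: (count_inj (f := fun z => decn z 0)); first exact: mons_uniq.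
    move=> x y; rewrite !mem_mons => hx hy /head_pos px /head_pos py e.
    by rewrite -(mulx_decn (hz0 _ hx) px) -(mulx_decn (hz0 _ hy) py) e.
  move=> z; rewrite mem_mons => hz pz.
  have hw := inM_decn hz hn (head_pos pz).
  split; first by rewrite mem_mons.
  rewrite -(lexgt_mulx _ (i := 0)) ?(inM_size hw) ?hs // mulx_decn ?hz0 //.
  exact: head_pos pz.
- apply: (count_inj (f := mulx 0)); first exact: mons_uniq.
    move=> x y; rewrite !mem_mons => hx hy _ _ e.
    by apply: mulx_inj e _ _; rewrite (inM_size hx) ?(inM_size hy).
  move=> w; rewrite mem_mons => hw pw; split; first by rewrite mem_mons inM_mulx.
  by rewrite lexgt_mulx // (inM_size hw) ?hs.
Qed.

Lemma shad_Lseg_upper n d u v z : inM n d u -> shad n d (Lseg n d u v) z -> lexge (mulx 0 u) z.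
Proof.
move=> hu /shadP[w [i [hw /and3P[_ huw _] hi ->]]].
have hs := inM_size hu; have hws := inM_size hw.
apply: (@lexge_trans _ (mulx i u)); first by apply: lexge_mulx_le; rewrite ?hs.
by apply: lexge_mulx; rewrite ?hs ?hws.
Qed.

Lemma shad_Linit_lower n d v z : inM n d v -> shad n d (Linit n d v) z ->
  lexge z (mulx n.-1 v).
Proof.
move=> hv /shadP[w [i [hw /andP[_ hwv] hi ->]]].
have hs := inM_size hv; have hws := inM_size hw.
apply: (@lexge_trans _ (mulx i v)); first by apply: lexge_mulx; rewrite ?hs ?hws.
by apply: lexge_mulx_le; rewrite ?hs; lia.
Qed.

Lemma shadow_lexseg n d L : completely_lexseg n d L -> is_lexseg n d.+1 (shad n d L).
Proof.
move=> hL w1 w w2; have := hL 1 w1 w w2; rewrite /= !addn0 addn1.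
have e : forall y, shad n d (fun w => inM n d w && L w) y = shad n d L y.
  by apply: shad_ext => y ->.
by rewrite !e.
Qed.

Section LsegShadow.

Variables (n d : nat) (u v : seq nat).
Hypotheses (n_gt0 : 0 < n) (u_in : inM n d u) (v_in : inM n d v) (uv : lexge u v).
Hypothesis shad_lexseg : is_lexseg n d.+1 (shad n d (Lseg n d u v)).

Lemma shad_Lseg_Linit z : shad n d (Lseg n d u v) z -> shad n d (Linit n d v) z.
Proof. by apply: shad_mono => w hw /and3P[_ _ h]; rewrite /Linit hw. Qed.

(* As Shad L(u,v) is the lexsegment from x_1 u to x_n v, Shad L^i(v) \ Shad L(u,v)
   consists exactly of the monomials above x_1 u. *)
Lemma shad_Linit_minus_Lseg z : inM n d.+1 z ->
  shad n d (Linit n d v) z && ~~ shad n d (Lseg n d u v) z = lexgt z (mulx 0 u).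
Proof.
move=> hz; have hs := inM_size u_in.
have hsz : size z = size (mulx 0 u) by rewrite (inM_size hz) size_mulx hs.
have hmu : inM n d.+1 (mulx 0 u) by apply: inM_mulx.
have hmv : inM n d.+1 (mulx n.-1 v) by apply: inM_mulx => //; lia.
apply/idP/idP => [/andP[hC hnA]|hgt].
  apply/negPn/negP => hng; case/negP: hnA.
  apply: (shad_lexseg hmu hmv _ _ hz _ (shad_Linit_lower v_in hC)).
  - by apply/shadP; exists u, 0; rewrite /Lseg u_in uv /lexge eqxx.
  - by apply/shadP; exists v, n.-1; rewrite /Lseg v_in uv /lexge eqxx; split => //; lia.
  - by rewrite lexgeNgt.
apply/andP; split.
  have hw := inM_decn hz n_gt0 (head_pos hgt).
  apply/shadP; exists (decn z 0), 0; split => //; last first.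
    by rewrite mulx_decn ?hsz ?size_mulx ?hs //; apply: head_pos hgt.
  rewrite /Linit hw /lexge; apply/orP; right; apply: lexgt_ge_trans uv.
  rewrite -(lexgt_mulx _ (i := 0)) ?(inM_size hw) ?hs // mulx_decn ?hsz ?size_mulx ?hs //.
  exact: head_pos hgt.
apply: contraL hgt => /(shad_Lseg_upper u_in).
by rewrite lexgeNgt // hsz.
Qed.

Lemma shad_Lseg_defect :
  shad_card n d (Linit n d v) = shad_card n d (Lseg n d u v) + rank n d u.
Proof.
rewrite /shad_card /card_deg (count_split_in (P := shad n d (Lseg n d u v))); last first.
  by move=> z _; apply: shad_Lseg_Linit.
rewrite -(count_above_x1 n_gt0 u_in); congr (_ + _).
by apply: eq_in_count => z; rewrite mem_mons; apply: shad_Linit_minus_Lseg.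
Qed.

End LsegShadow.

Section Gotzmann.

Variables (n d : nat) (u v : seq nat).
Hypotheses (n_gt1 : 1 < n) (u_in : inM n d u) (v_in : inM n d v) (uv : lexge u v).
Hypothesis shad_lexseg : is_lexseg n d.+1 (shad n d (Lseg n d u v)).

Let n_gt0 : 0 < n. Proof. exact: ltnW. Qed.

(* If rank u <= j, the initial lexsegment of size |L(u,v)| is L^i(v_(rank u)). *)
Lemma gotzmann_of_rank_le : rank n d u <= nth 0 v n.-1 -> gotzmann n d (Lseg n d u v).
Proof.
move=> hpj; have [vp [hvp _ hrk hsh]] := climb n_gt1 v_in hpj.
have hm : card_deg n d (Lseg n d u v) = (rank n d vp).+1.
  by have := card_Lseg u_in v_in uv; lia.
change (shad_card n d (Lseg n d u v) =
  shad_card n d (init_lexseg_card n d (card_deg n d (Lseg n d u v)))).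
rewrite hm (shad_card_ext (init_Linit hvp)).
by have := shad_Lseg_defect n_gt0 u_in v_in uv shad_lexseg; lia.
Qed.

(* If rank u > j, the initial lexsegment E of size |L(u,v)| sits strictly above v_j,
   so its shadow is smaller than that of L(u,v). *)
Lemma rank_le_of_gotzmann : gotzmann n d (Lseg n d u v) -> rank n d u <= nth 0 v n.-1.
Proof.
move=> hg; rewrite leqNgt; apply/negP => hpj.
have [vj [hvj hnth hrk hsh]] := climb n_gt1 v_in (leqnn (nth 0 v n.-1)).
rewrite subnn in hnth.
set m := card_deg n d (Lseg n d u v) in hg.
have hm := card_Lseg u_in v_in uv; rewrite -/m in hm.
set E := init_lexseg_card n d m in hg.
have hcardE : card_deg n d E = m.
  apply: card_init; apply: leq_trans (count_size (Linit n d v) _) => /=.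
  by rewrite -/(card_deg n d _) card_Linit //; lia.
have hEF w : inM n d w -> E w -> Labove n d vj w.
  move=> hw; rewrite /E init_rank // => hr; rewrite /Labove hw (rank_gt hw hvj) //; lia.
have hdown w w' : inM n d w -> inM n d w' -> E w' -> lexgt w w' -> E w.
  by move=> hw hw'; rewrite /E !init_rank // => h1 /(rank_lt hw) h2; lia.
have := shad_growth n_gt0 hEF hdown; rewrite hcardE card_Labove.
have := shad_step_zero n_gt1 hvj hnth.
have := shad_Lseg_defect n_gt0 u_in v_in uv shad_lexseg.
change (shad_card n d (Lseg n d u v) = shad_card n d E) in hg; lia.
Qed.

End Gotzmann.

(* With one variable M_d is a single monomial, so every lexsegment is initial. *)
Lemma n_gt1_of_not_init n d u v : 0 < d -> inM n d u -> inM n d v ->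
  ~ is_init_lexseg n d (Lseg n d u v) -> 1 < n.
Proof.
case: n => [|[|n]] // hd hu hv hni.
  by move: hu; rewrite /inM => /andP[/eqP/size0nil -> /eqP h0]; rewrite -h0 in hd.
have single x y : inM 1 d x -> inM 1 d y -> x = y.
  by case: x y => [|x0 [|? ?]] [|y0 [|? ?]] //; rewrite /inM /= !addn0 => /eqP-> /eqP->.
case: hni; exists u; split => // z hz.
by rewrite /Lseg /Linit hz (single z u hz hu) (single v u hv hu) /lexge eqxx.
Qed.

(* Only the first shadow of L(u,v) being a lexsegment is used. *)
Theorem mainTheorem4 (n d : nat) (u v : seq nat) :
  2 <= d ->
  inM n d u -> inM n d v -> lexge u v ->
  0 < nth 0 u 0 ->
  completely_lexseg n d (Lseg n d u v) ->
  ~ is_init_lexseg n d (Lseg n d u v) ->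
  let j := nth 0 v n.-1 in
  let a := card_deg n d (fun w => inM n d w && ~~ lexge w u) in
  gotzmann n d (Lseg n d u v) <-> 'C(n + d - 1, d) <= a + (j + 1).
Proof.
move=> hd hu hv huv _ hcl hni j a.
have hn := n_gt1_of_not_init (ltnW hd) hu hv hni.
have hsh := shadow_lexseg hcl.
have ha : a + (rank n d u).+1 = 'C(n + d - 1, d).
  by rewrite /a card_below // -(prednK (ltnW hn)) size_mons addSn subn1.
rewrite -ha leq_add2l addn1 ltnS.
split; [exact: rank_le_of_gotzmann | exact: gotzmann_of_rank_le].
Qed.
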